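(* Let $V$ be a simple $\mathcal{R}$-module. If there exist a nonzero vector $v\in V$ and $M\in\mathbb{Z}_+$ such that $L_mv=G_mv=0$ for all $m\geq M$, then $V$ is a smooth module.
   Context: The Ramond algebra $\mathcal{R}=\mathcal{R}_{\bar 0}\oplus\mathcal{R}_{\bar 1}$ is the Lie superalgebra with basis $\{L_m,G_m,c\mid m\in\mathbb{Z}\}$, where $\mathcal{R}_{\bar 0}=\mathrm{span}\{L_m,c\}$, $\mathcal{R}_{\bar 1}=\mathrm{span}\{G_m\}$, and brackets $[L_m,L_n]=(m-n)L_{m+n}+\delta_{m+n,0}\frac{m^3-m}{12}c$, $[L_m,G_n]=(\frac m2-n)G_{m+n}$, $[G_m,G_n]=2L_{m+n}+\frac13\delta_{m+n,0}(m^2-\frac14)c$, $[\mathcal{R},c]=0$. Modules are $\mathbb{Z}_2$-graded (super)modules. For $m\in\mathbb{Z}$ let $\mathcal{R}_m=\mathrm{span}\{L_m,G_m,\delta_{m,0}c\}$. An $\mathcal{R}$-module is smooth if for every vector $u$ there is $n\in\mathbb{N}$ with $\mathcal{R}_mu=0$ for all $m>n$. *)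

From HB Require Import structures.
From mathcomp Require Import all_boot all_order all_algebra.
Set Implicit Arguments. Unset Strict Implicit. Unset Printing Implicit Defensive.
Import Order.TTheory GRing.Theory Num.Theory.
Local Open Scope ring_scope.

Definition subspace (K : fieldType) (V : lmodType K) (W : V -> Prop) : Prop :=
  W 0 /\ (forall (a : K) (x y : V), W x -> W y -> W (a *: x + y)).

Definition linear_map (K : fieldType) (V : lmodType K) (f : V -> V) : Prop :=
  forall (a : K) (x y : V), f (a *: x + y) = a *: f x + f y.

Record ramond_module (K : fieldType) (V : lmodType K) := RamondModule {
  V0 : V -> Prop;
  V1 : V -> Prop;
  L : int -> V -> V;
  G : int -> V -> V;
  C : V -> V;
  V0_sub : subspace V0;
  V1_sub : subspace V1;
  V_decomp : forall v : V, exists v0 v1, V0 v0 /\ V1 v1 /\ v = v0 + v1;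
  V_direct : forall v : V, V0 v -> V1 v -> v = 0;
  L_lin : forall m, linear_map (L m);
  G_lin : forall m, linear_map (G m);
  C_lin : linear_map C;
  L_even0 : forall m v, V0 v -> V0 (L m v);
  L_even1 : forall m v, V1 v -> V1 (L m v);
  C_even0 : forall v, V0 v -> V0 (C v);
  C_even1 : forall v, V1 v -> V1 (C v);
  G_odd0 : forall m v, V0 v -> V1 (G m v);
  G_odd1 : forall m v, V1 v -> V0 (G m v);
  LL_rel : forall (m n : int) (v : V),
    L m (L n v) - L n (L m v) =
      (m - n)%:~R *: L (m + n) v
      + (if m + n == 0 then ((m ^+ 3 - m)%:~R / 12%:R) *: C v else 0);
  LG_rel : forall (m n : int) (v : V),
    L m (G n v) - G n (L m v) = (m%:~R / 2%:R - n%:~R) *: G (m + n) v;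
  GG_rel : forall (m n : int) (v : V),
    G m (G n v) + G n (G m v) =
      2%:R *: L (m + n) v
      + (if m + n == 0 then ((m%:~R ^+ 2 - 1 / 4%:R) / 3%:R) *: C v else 0);
  CL_rel : forall m v, C (L m v) = L m (C v);
  CG_rel : forall m v, C (G m v) = G m (C v)
}.

(* Submodules of a supermodule are Z_2-graded submodules. *)
Definition graded_submodule (K : fieldType) (V : lmodType K)
    (M : ramond_module V) (W : V -> Prop) : Prop :=
  [/\ subspace W,
      (forall m w, W w -> W (L M m w)),
      (forall m w, W w -> W (G M m w)),
      (forall w, W w -> W (C M w)) &
      (forall w, W w -> exists w0 w1,
          [/\ V0 M w0, V1 M w1, W w0, W w1 & w = w0 + w1])].

Definition simple_module (K : fieldType) (V : lmodType K) (M : ramond_module V) : Prop :=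
  (exists v : V, v != 0) /\
  (forall W : V -> Prop, graded_submodule M W ->
     (forall w, W w -> w = 0) \/ (forall w, W w)).

(* Smooth: every u is killed by R_m = span{L_m, G_m, delta_{m,0} c} for m > n. *)
Definition smooth_module (K : fieldType) (V : lmodType K) (M : ramond_module V) : Prop :=
  forall u : V, exists n : nat, forall m : int, (n%:Z < m)%R ->
    [/\ L M m u = 0, G M m u = 0 & (m = 0 -> C M u = 0)].

(* The vectors killed by all L_m and G_m with m large enough form a graded
   submodule: by the brackets, L_k and G_k shift the threshold by at most |k|
   (beyond that threshold m + k <> 0, so the central terms never appear), and
   parity makes the threshold pass to homogeneous components.  This submodule
   contains v <> 0, so by simplicity it is all of V, which is smoothness. *)
From HB Require Import structures.
From mathcomp Require Import all_boot all_order all_algebra.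
From mathcomp Require Import zify.
Import Order.TTheory GRing.Theory Num.Theory.
Local Open Scope ring_scope.

Section LinearFacts.
Context {K : fieldType} {V : lmodType K}.

Lemma linear_map0 {f : V -> V} : linear_map f -> f 0 = 0.
Proof.
by move=> f_lin; have := f_lin (-1) 0 0; rewrite scaler0 addr0 scaleN1r addNr.
Qed.

Lemma linear_mapD {f : V -> V} (x y : V) :
  linear_map f -> f (x + y) = f x + f y.
Proof. by move=> f_lin; have := f_lin 1 x y; rewrite !scale1r. Qed.

Lemma subspaceN (W : V -> Prop) (x : V) : subspace W -> W x -> W (- x).
Proof.
by move=> [W0 Wlin] Wx; have := Wlin (-1) x 0 Wx W0; rewrite scaleN1r addr0.
Qed.

End LinearFacts.

Section SmoothVectors.
Context {K : fieldType} {V : lmodType K} (M : ramond_module V).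

Lemma homogeneous_sum_eq0 (v0 v1 : V) :
  V0 M v0 -> V1 M v1 -> v0 + v1 = 0 -> v0 = 0 /\ v1 = 0.
Proof.
move=> V0v0 V1v1 /eqP; rewrite addr_eq0 => /eqP v0E.
have v00 : v0 = 0.
  apply: (V_direct V0v0); rewrite v0E; apply: subspaceN => //; exact: V1_sub.
by split=> //; apply/eqP; rewrite -oppr_eq0 -v0E v00.
Qed.

Definition killed_above (n : nat) (u : V) : Prop :=
  forall m : int, n%:Z < m -> L M m u = 0 /\ G M m u = 0.

Definition smooth_vector (u : V) : Prop := exists n : nat, killed_above n u.

Lemma killed_above_le (n n' : nat) (u : V) :
  (n <= n')%N -> killed_above n u -> killed_above n' u.
Proof. by move=> le_nn' un m lt_n'm; apply: un; lia. Qed.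

Lemma killed_above_L (n : nat) (k : int) (u : V) :
  killed_above n u -> killed_above (n + `|k|) (L M k u).
Proof.
move=> un m lt_m.
have [Lm Gm] : L M m u = 0 /\ G M m u = 0 by apply: un; lia.
have [Lmk Gmk] : L M (m + k) u = 0 /\ G M (m + k) u = 0 by apply: un; lia.
have mk_neq0 : (m + k == 0) = false by apply/eqP; lia.
split.
- have := LL_rel M m k u.
  by rewrite mk_neq0 addr0 Lm Lmk (linear_map0 (L_lin M k)) scaler0 subr0.
- have := LG_rel M k m u.
  rewrite Gm (linear_map0 (L_lin M k)) (addrC k) Gmk scaler0 sub0r.
  by move=> /eqP; rewrite oppr_eq0 => /eqP.
Qed.

Lemma killed_above_G (n : nat) (k : int) (u : V) :
  killed_above n u -> killed_above (n + `|k|) (G M k u).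
Proof.
move=> un m lt_m.
have [Lm Gm] : L M m u = 0 /\ G M m u = 0 by apply: un; lia.
have [Lmk Gmk] : L M (m + k) u = 0 /\ G M (m + k) u = 0 by apply: un; lia.
have mk_neq0 : (m + k == 0) = false by apply/eqP; lia.
split.
- have := LG_rel M m k u.
  by rewrite Lm (linear_map0 (G_lin M k)) Gmk scaler0 subr0.
- have := GG_rel M m k u.
  by rewrite Gm (linear_map0 (G_lin M k)) mk_neq0 Lmk scaler0 !addr0.
Qed.

Lemma killed_above_C (n : nat) (u : V) :
  killed_above n u -> killed_above n (C M u).
Proof.
move=> un m /un [Lm Gm].
by rewrite -CL_rel -CG_rel Lm Gm (linear_map0 (C_lin M)).
Qed.

Lemma killed_above_lincomb (n : nat) (a : K) (x y : V) :
  killed_above n x -> killed_above n y -> killed_above n (a *: x + y).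
Proof.
move=> xn yn m /[dup] /xn [Lx Gx] /yn [Ly Gy].
by rewrite (L_lin M) (G_lin M) Lx Gx Ly Gy scaler0 addr0.
Qed.

Lemma killed_above_components {n : nat} {v0 v1 : V} :
  V0 M v0 -> V1 M v1 -> killed_above n (v0 + v1) ->
  killed_above n v0 /\ killed_above n v1.
Proof.
move=> V0v0 V1v1 vn.
have killed m : n%:Z < m ->
    (L M m v0 = 0 /\ L M m v1 = 0) /\ (G M m v1 = 0 /\ G M m v0 = 0).
  move=> /vn [Lv Gv]; split.
  - apply: homogeneous_sum_eq0; [exact: L_even0 | exact: L_even1 |].
    by rewrite -(linear_mapD _ _ (L_lin M m)).
  - apply: homogeneous_sum_eq0; [exact: G_odd1 | exact: G_odd0 |].
    by rewrite addrC -(linear_mapD _ _ (G_lin M m)).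
by split=> m /killed [[? ?] [? ?]].
Qed.

Lemma smooth_vector_graded_submodule : graded_submodule M smooth_vector.
Proof.
split.
- split.
    exists 0%N => m _.
    by rewrite (linear_map0 (L_lin M m)) (linear_map0 (G_lin M m)).
  move=> a x y [nx xn] [ny yn]; exists (nx + ny)%N.
  apply: killed_above_lincomb.
    by apply: killed_above_le xn; rewrite leq_addr.
  by apply: killed_above_le yn; rewrite leq_addl.
- by move=> k w [n wn]; exists (n + `|k|)%N; apply: killed_above_L.
- by move=> k w [n wn]; exists (n + `|k|)%N; apply: killed_above_G.
- by move=> w [n wn]; exists n; apply: killed_above_C.
- move=> w [n wn].
  have [w0 [w1 [V0w0 [V1w1 wE]]]] := V_decomp M w.
  rewrite wE in wn.
  have [w0n w1n] := killed_above_components V0w0 V1w1 wn.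
  by exists w0, w1; split=> //; [exists n | exists n].
Qed.

End SmoothVectors.

Theorem lemma4p2 (K : numClosedFieldType) (V : lmodType K) (M : ramond_module V) :
  simple_module M ->
  (exists (v : V) (N : nat), v != 0 /\ (0 < N)%N /\
     forall m : int, (N%:Z <= m)%R -> L M m v = 0 /\ G M m v = 0) ->
  smooth_module M.
Proof.
move=> [_ M_simple] [v [N [v_neq0 [_ vN]]]].
have smooth_v : smooth_vector M v by exists N => m /ltW; apply: vN.
have [all0 | all_smooth] := M_simple _ (smooth_vector_graded_submodule M).
  by move: v_neq0; rewrite (all0 v smooth_v) eqxx.
move=> u; have [n un] := all_smooth u; exists n => m lt_nm.
have [Lu Gu] := un m lt_nm.
by split=> // m0; move: lt_nm; rewrite m0; lia.
Qed.
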